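(* Let $(\mathcal A,\mathcal T,(-))$ be a meta-tangible $\mathcal T$-group module triple, with identity $\mathbb 1$, and put $e=\mathbb 1(-)\mathbb 1$, $e'=e+\mathbb 1$. Then one of the following holds: (i) $(\mathcal A,\mathcal T,(-))$ is $(-)$-bipotent; (ii) $e'=\mathbb 1$, and moreover either (a) $(-)$ is of the first kind and $\mathcal A$ has characteristic $2$ (i.e. $\mathbf 3=\mathbb 1$), in which case $\mathcal A$ has height at most $2$; or (b) $(-)$ is of the second kind, and either $\mathcal A$ has finite (positive) characteristic or the elements $\mathbf m$ and $(-)\mathbf m$, $m\in\mathbb N$, are pairwise distinct.
   Context: $(\mathcal A,+,\mathbb 0)$ commutative monoid, $\mathcal T\subseteq\mathcal A\setminus\{\mathbb 0\}$. A negation map is $(-):\mathcal A\to\mathcal A$ with $(-)(b_1+b_2)=(-)b_1+(-)b_2$, $(-)((-)b)=b$, $(-)\mathbb 0=\mathbb 0$, $(-)\mathcal T\subseteq\mathcal T$. Write $b(-)c:=b+((-)c)$, $b^\circ:=b(-)b$, $\mathcal A^\circ=\{b^\circ:b\in\mathcal A\}$. A $\mathcal T$-triple $(\mathcal A,\mathcal T,(-))$: such data with an action $\mathcal T\times\mathcal A\to\mathcal A$ satisfying $a(b_1+b_2)=ab_1+ab_2$, $a\mathbb 0=\mathbb 0$, $(-)(ab)=((-)a)b=a((-)b)$, with $\mathcal T\cap\mathcal A^\circ=\emptyset$ and every element of $\mathcal A$ a finite sum of elements of $\mathcal T$. It is a $\mathcal T$-group module triple if moreover $\mathcal T$ is a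 group with identity $\mathbb 1$ whose multiplication is the restriction of the action, $\mathbb 1b=b$ and $(a_1a_2)b=a_1(a_2b)$. Meta-tangible: $a+b\in\mathcal T$ for all $a,b\in\mathcal T$ with $b\neq(-)a$. $(-)$-bipotent: $a+b\in\{a,b\}$ for all $a,b\in\mathcal T$ with $b\neq(-)a$. $(-)$ is of the first kind if $(-)a=a$ for all $a\in\mathcal T$, of the second kind if $(-)a\neq a$ for all $a\in\mathcal T$. $\mathbf m:=\mathbb 1+\cdots+\mathbb 1$ ($m$ summands). $\mathcal A$ has characteristic $k\ge1$ if $k$ is minimal with $(k+1)b=b$ for all $b\in\mathcal A$ (here $nb$ is the $n$-fold sum), and characteristic $0$ if no such $k$ exists. Height of $c$: least $t$ with $c=\sum_{i=1}^ta_i$, $a_i\in\mathcal T$; height of $\mathcal A$: supremum over its elements. *)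

From Stdlib Require Import List Arith.
Import ListNotations.

Section Triples.
Variables (A : Type) (add : A -> A -> A) (zero : A)
  (T : A -> Prop) (neg : A -> A) (act : A -> A -> A) (one : A).

Definition lsum (l : list A) : A := fold_right add zero l.

Fixpoint nsum (n : nat) (b : A) : A :=
  match n with 0 => zero | S k => add b (nsum k b) end.

Definition minus (b c : A) : A := add b (neg c).

(* A T-triple (A,T,(-)) with the action T x A -> A given by act
   (values of act with non-tangible first argument are irrelevant). *)
Definition is_T_triple : Prop :=
  (forall x y z, add x (add y z) = add (add x y) z) /\
  (forall x y, add x y = add y x) /\
  (forall x, add zero x = x) /\
  (forall a, T a -> a <> zero) /\
  (forall b1 b2, neg (add b1 b2) = add (neg b1) (neg b2)) /\
  (forall b, neg (neg b) = b) /\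
  neg zero = zero /\
  (forall a, T a -> T (neg a)) /\
  (forall a b1 b2, T a -> act a (add b1 b2) = add (act a b1) (act a b2)) /\
  (forall a, T a -> act a zero = zero) /\
  (forall a b, T a -> neg (act a b) = act (neg a) b /\ neg (act a b) = act a (neg b)) /\
  (forall b, ~ T (minus b b)) /\
  (forall c, exists l, Forall T l /\ c = lsum l).

(* T-group module triple: T is a group with identity one whose
   multiplication is the restriction of the action. *)
Definition is_T_group_module_triple : Prop :=
  is_T_triple /\
  T one /\
  (forall a1 a2, T a1 -> T a2 -> T (act a1 a2)) /\
  (forall a, T a -> act a one = a) /\
  (forall a, T a -> exists a', T a' /\ act a a' = one /\ act a' a = one) /\
  (forall b, act one b = b) /\
  (forall a1 a2 b, T a1 -> T a2 -> act (act a1 a2) b = act a1 (act a2 b)).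

Definition meta_tangible : Prop :=
  forall a b, T a -> T b -> b <> neg a -> T (add a b).

Definition neg_bipotent : Prop :=
  forall a b, T a -> T b -> b <> neg a -> add a b = a \/ add a b = b.

Definition first_kind : Prop := forall a, T a -> neg a = a.
Definition second_kind : Prop := forall a, T a -> neg a <> a.

Definition has_char (k : nat) : Prop :=
  1 <= k /\ (forall b, nsum (S k) b = b) /\
  (forall j, 1 <= j -> j < k -> ~ (forall b, nsum (S j) b = b)).

Definition sum_of_tangibles (c : A) (t : nat) : Prop :=
  exists l, length l = t /\ Forall T l /\ c = lsum l.

Definition height (c : A) (t : nat) : Prop :=
  sum_of_tangibles c t /\ forall t', sum_of_tangibles c t' -> t <= t'.

Definition height_le (h : nat) : Prop :=
  forall c t, height c t -> t <= h.

Definition signed (s : bool) (x : A) : A := if s then x else neg x.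
Definition units_pairwise_distinct : Prop :=
  forall m n s s', 1 <= m -> 1 <= n ->
    signed s (nsum m one) = signed s' (nsum n one) -> m = n /\ s = s'.

End Triples.

From Stdlib Require Import List Arith Lia Classical.
Import ListNotations.

(* Since the triple is not (-)-bipotent, there are tangible a, b with
   b <> (-)a and c := a + b tangible but outside {a, b}.  The quasi-zero
   c(-)c is not tangible, so by meta-tangibility the partial sums of
   c + (-)a + (-)b, resp. c + a + b, must be forced back onto the summand
   left over.  For (-) of the first kind this gives c + a = b and c + b = a,
   hence 3a = a; dividing by a gives 3 = 1, after which any three tangibles
   sum to at most two.  Otherwise it gives c (-) a = b, which rules out
   1 + 1 = 1, and the same argument applied to 1 + 1 yields e' = 1.  Then
   (m+1)(-)1 = m for m >= 1, so any coincidence among the elements m and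
   (-)m produces p = 1 for some p >= 2, i.e. finite characteristic. *)

Section GroupModuleTriple.

Variables (A : Type) (add : A -> A -> A) (zero : A)
  (T : A -> Prop) (neg : A -> A) (act : A -> A -> A) (one : A).

Local Notation "b *+ n" := (nsum A add zero n b) (at level 40).

Hypothesis add_assoc : forall x y z, add x (add y z) = add (add x y) z.
Hypothesis add_comm : forall x y, add x y = add y x.
Hypothesis add0 : forall x, add zero x = x.
Hypothesis neg_add : forall b1 b2, neg (add b1 b2) = add (neg b1) (neg b2).
Hypothesis negK : forall b, neg (neg b) = b.
Hypothesis tangible_neg : forall a, T a -> T (neg a).
Hypothesis act_addr :
  forall a b1 b2, T a -> act a (add b1 b2) = add (act a b1) (act a b2).
Hypothesis act0r : forall a, T a -> act a zero = zero.
Hypothesis act_neg :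
  forall a b, T a -> neg (act a b) = act (neg a) b /\ neg (act a b) = act a (neg b).
Hypothesis quasi_zero_not_tangible : forall b, ~ T (minus A add neg b b).
Hypothesis tangible_spanning : forall c, exists l, Forall T l /\ c = lsum A add zero l.
Hypothesis tangible_one : T one.
Hypothesis act1r : forall a, T a -> act a one = a.
Hypothesis tangible_inv :
  forall a, T a -> exists a', T a' /\ act a a' = one /\ act a' a = one.
Hypothesis Hmt : meta_tangible A add T neg.

Lemma add0r x : add x zero = x.
Proof. rewrite add_comm. apply add0. Qed.

Lemma neg_inj x y : neg x = neg y -> x = y.
Proof. intro H. rewrite <- (negK x), H. apply negK. Qed.

Lemma nsum0 n : zero *+ n = zero.
Proof. induction n as [|n IH]; simpl; [|rewrite IH]; auto. Qed.

Lemma nsumD n x y : add x y *+ n = add (x *+ n) (y *+ n).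
Proof.
  induction n as [|n IH]; simpl.
  - symmetry. apply add0.
  - rewrite IH, <- !add_assoc. f_equal.
    rewrite !add_assoc, (add_comm y). reflexivity.
Qed.

Lemma nsum1 b : b *+ 1 = b.
Proof. apply add0r. Qed.

Lemma nsum2 b : b *+ 2 = add b b.
Proof. change (add b (b *+ 1) = add b b). rewrite nsum1. reflexivity. Qed.

Lemma act_nsum a b n : T a -> act a (b *+ n) = act a b *+ n.
Proof.
  intro Ha. induction n as [|n IH]; simpl; auto.
  rewrite act_addr, IH; auto.
Qed.

Lemma nsum_one_all p : one *+ p = one -> forall b, b *+ p = b.
Proof.
  intros Hp b. destruct (tangible_spanning b) as [l [Hl ->]].
  induction Hl as [|x l Hx _ IH]; simpl.
  - apply nsum0.
  - rewrite nsumD, IH. f_equal.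
    rewrite <- (act1r x Hx) at 1. rewrite <- act_nsum, Hp; auto.
Qed.

Lemma nsum_one_of_tangible a p : T a -> a *+ p = a -> one *+ p = one.
Proof.
  intros Ha Hp. destruct (tangible_inv a Ha) as [a' [Ha' [_ Ha'a]]].
  rewrite <- Ha'a, <- act_nsum, Hp; auto.
Qed.

Lemma tangible_neg_fixed_iff a : T a -> (neg a = a <-> neg one = one).
Proof.
  intro Ha. destruct (tangible_inv a Ha) as [a' [Ha' [_ Ha'a]]]. split; intro H.
  - rewrite <- Ha'a. destruct (act_neg a' a Ha') as [_ ->]. rewrite H. reflexivity.
  - rewrite <- (act1r a Ha). destruct (act_neg a one Ha) as [_ ->]. rewrite H. reflexivity.
Qed.

Lemma not_tangible_sum3 x y z :
  T x -> T y -> T z -> y <> neg x -> ~ T (add (add x y) z) -> z = neg (add x y).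
Proof.
  intros Hx Hy Hz Hxy Hn. apply NNPP. intro Hz'. apply Hn. apply Hmt; auto.
Qed.

Lemma not_bipotent_witness :
  ~ neg_bipotent A add T neg ->
  exists a b, T a /\ T b /\ b <> neg a /\ add a b <> a /\ add a b <> b.
Proof.
  intro Hnb. apply NNPP. intro Hn. apply Hnb. intros a b Ha Hb Hab.
  destruct (classic (add a b = a)); [now left|].
  destruct (classic (add a b = b)); [now right|].
  exfalso. apply Hn. now exists a, b.
Qed.

Lemma add_neg_cancel a b :
  T a -> T b -> b <> neg a -> add a b <> a -> add (add a b) (neg a) = b.
Proof.
  intros Ha Hb Hab Hc. apply neg_inj. symmetry.
  apply not_tangible_sum3; auto.
  - intro H. apply Hc. symmetry. apply neg_inj. exact H.
  - rewrite <- add_assoc, <- neg_add. apply quasi_zero_not_tangible.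
Qed.

Lemma not_bipotent_two_neq_one : ~ neg_bipotent A add T neg -> add one one <> one.
Proof.
  intros Hnb H11.
  destruct (not_bipotent_witness Hnb) as [a [b [Ha [Hb [Hab [Hca Hcb]]]]]].
  assert (Haa : add a a = a).
  { rewrite <- nsum2. apply nsum_one_all. rewrite nsum2. exact H11. }
  apply Hcb. rewrite <- (add_neg_cancel a b) at 1; auto.
  rewrite !add_assoc, Haa. apply add_neg_cancel; auto.
Qed.

Section FirstKind.

Hypothesis Hfk : first_kind A T neg.

Lemma first_kind_add_tangible x y : T x -> T y -> y <> x -> T (add x y).
Proof. intros Hx Hy Hxy. apply Hmt; auto. rewrite Hfk; auto. Qed.

Lemma first_kind_double_not_tangible x : T x -> ~ T (add x x).
Proof.
  intros Hx. pose proof (quasi_zero_not_tangible x) as H.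
  unfold minus in H. rewrite Hfk in H; auto.
Qed.

Lemma first_kind_nsum3_eq a b :
  T a -> T b -> b <> a -> add a b <> a -> add a b <> b -> a *+ 3 = a.
Proof.
  intros Ha Hb Hab Hca Hcb.
  assert (Hc : T (add a b)) by (apply first_kind_add_tangible; auto).
  set (c := add a b) in *.
  assert (Hcca : add c c = add (add c a) b) by (rewrite <- add_assoc; reflexivity).
  assert (Hccb : add c c = add (add c b) a)
    by (rewrite <- add_assoc, (add_comm b a); reflexivity).
  assert (Hb' : b = add c a).
  { rewrite <- (Hfk (add c a)) by (apply first_kind_add_tangible; auto).
    apply not_tangible_sum3; auto.
    - rewrite Hfk; auto.
    - rewrite <- Hcca. apply first_kind_double_not_tangible; auto. }
  assert (Ha' : a = add c b).
  { rewrite <- (Hfk (add c b)) by (apply first_kind_add_tangible; auto).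
    apply not_tangible_sum3; auto.
    - rewrite Hfk; auto.
    - rewrite <- Hccb. apply first_kind_double_not_tangible; auto. }
  assert (Hsq : add a a = add b b).
  { rewrite <- Hb' in Hcca. rewrite <- Ha' in Hccb. congruence. }
  change (add a (a *+ 2) = a). rewrite nsum2, Hsq, add_assoc. symmetry. exact Ha'.
Qed.

Lemma first_kind_three_eq_one : ~ neg_bipotent A add T neg -> one *+ 3 = one.
Proof.
  intro Hnb.
  destruct (not_bipotent_witness Hnb) as [a [b [Ha [Hb [Hab [Hca Hcb]]]]]].
  apply (nsum_one_of_tangible a); auto.
  apply (first_kind_nsum3_eq a b); auto.
  rewrite <- (Hfk a); auto.
Qed.

Hypothesis three_eq_one : one *+ 3 = one.

Lemma first_kind_has_char2 : has_char A add zero 2.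
Proof.
  split; [lia|]. split; [apply nsum_one_all; exact three_eq_one|].
  intros j Hj1 Hj2 Hall. replace j with 1 in Hall by lia.
  apply (first_kind_double_not_tangible one tangible_one).
  rewrite <- nsum2, Hall. exact tangible_one.
Qed.

Lemma first_kind_sum3_shorten x y z : T x -> T y -> T z ->
  exists l, length l <= 2 /\ Forall T l /\ lsum A add zero l = add x (add y z).
Proof.
  intros Hx Hy Hz. cbn.
  destruct (classic (y = x)) as [<-|Hyx].
  - destruct (classic (z = y)) as [->|Hzy].
    + exists [y]. cbn. repeat split; auto.
      rewrite add0r, <- nsum2. symmetry.
      change (y *+ 3 = y). apply nsum_one_all. exact three_eq_one.
    + exists [y; add y z]. cbn. rewrite add0r. repeat split; auto.
      repeat constructor; auto. apply first_kind_add_tangible; auto.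
  - exists [add x y; z]. cbn. rewrite add0r, add_assoc. repeat split; auto.
    repeat constructor; auto. apply first_kind_add_tangible; auto.
Qed.

Lemma first_kind_shorten l : Forall T l ->
  exists l', length l' <= 2 /\ Forall T l' /\ lsum A add zero l' = lsum A add zero l.
Proof.
  induction 1 as [|x l Hx _ [l' [Hlen [Hl' Hsum]]]].
  - exists []. cbn. auto.
  - change (lsum A add zero (x :: l)) with (add x (lsum A add zero l)). rewrite <- Hsum.
    destruct l' as [|y [|z [|w r]]]; cbn in Hlen |- *.
    + exists [x]. cbn. auto.
    + exists [x; y]. cbn. auto.
    + inversion Hl' as [|? ? Hy Hz']. inversion Hz' as [|? ? Hz _].
      rewrite add0r. apply first_kind_sum3_shorten; auto.
    + lia.
Qed.

Lemma first_kind_height_le2 : height_le A add zero T 2.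
Proof.
  intros c t [_ Hmin]. destruct (tangible_spanning c) as [l [Hl ->]].
  destruct (first_kind_shorten l Hl) as [l' [Hlen [Hl' Hsum]]].
  enough (t <= length l') by lia.
  apply Hmin. now exists l'.
Qed.

Lemma first_kind_e'_one : add (minus A add neg one one) one = one.
Proof.
  unfold minus. rewrite (Hfk one tangible_one), <- add_assoc, <- nsum2.
  exact three_eq_one.
Qed.

End FirstKind.

Lemma first_kind_alternative :
  neg one = one -> ~ neg_bipotent A add T neg ->
  add (minus A add neg one one) one = one /\
  first_kind A T neg /\ has_char A add zero 2 /\ height_le A add zero T 2.
Proof.
  intros Hn1 Hnb.
  assert (Hfk : first_kind A T neg) by (intros a Ha; apply (tangible_neg_fixed_iff a Ha); exact Hn1).
  pose proof (first_kind_three_eq_one Hfk Hnb) as H3.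
  split; [|split; [|split]].
  - apply first_kind_e'_one; auto.
  - exact Hfk.
  - apply first_kind_has_char2; auto.
  - apply first_kind_height_le2; auto.
Qed.

Lemma e'_eq : add (minus A add neg one one) one = add (add one one) (neg one).
Proof. unfold minus. rewrite <- !add_assoc, (add_comm (neg one)). reflexivity. Qed.

Lemma two_minus_one_of_two_neq_one :
  neg one <> one -> add one one <> one -> add (add one one) (neg one) = one.
Proof.
  intros Hn1 H21. apply neg_inj. symmetry. apply not_tangible_sum3; auto.
  - intro H. apply H21. symmetry. apply neg_inj. exact H.
  - rewrite <- add_assoc, <- neg_add. apply quasi_zero_not_tangible.
Qed.

Section Units.

Hypothesis two_minus_one : add (add one one) (neg one) = one.

Lemma nsum_one_pred n : add (one *+ S (S n)) (neg one) = one *+ S n.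
Proof.
  change (add (add one (add one (one *+ n))) (neg one) = add one (one *+ n)).
  rewrite add_assoc, <- add_assoc, (add_comm (one *+ n)), add_assoc, two_minus_one.
  reflexivity.
Qed.

Lemma nsum_one_periodic m d : one *+ S m = one *+ S (m + d) -> one *+ S d = one.
Proof.
  induction m as [|m IH]; intro H.
  - rewrite nsum1 in H. symmetry. exact H.
  - apply IH. cbn [Nat.add] in H.
    rewrite <- (nsum_one_pred m), <- (nsum_one_pred (m + d)), H. reflexivity.
Qed.

Lemma nsum_one_neg m n :
  one *+ S m = neg (one *+ S n) -> one *+ S (S (S (m + n))) = one.
Proof.
  revert n. induction m as [|m IH]; intros n H.
  - assert (Hn : one *+ S n = neg one).
    { rewrite <- (negK (one *+ S n)), <- H, nsum1. reflexivity. }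
    change (add one (add one (one *+ S n)) = one).
    rewrite Hn, add_assoc. exact two_minus_one.
  - cbn [Nat.add]. rewrite <- Nat.add_succ_r. apply IH.
    rewrite <- nsum_one_pred, H. change (one *+ S (S n)) with (add one (one *+ S n)).
    rewrite neg_add. apply add_comm.
Qed.

Lemma units_distinct_or_periodic :
  units_pairwise_distinct A add zero neg one \/
  exists p, 2 <= p /\ one *+ p = one.
Proof.
  destruct (classic (exists p, 2 <= p /\ one *+ p = one)) as [Hp|Hno]; [now right|left].
  assert (Hsame : forall m n, one *+ S m = one *+ S n -> m = n).
  { intros m n H. destruct (lt_eq_lt_dec m n) as [[Hlt|]|Hlt]; auto; exfalso; apply Hno.
    - exists (S (n - m)). split; [lia|]. apply (nsum_one_periodic m).
      replace (m + (n - m)) with n by lia. exact H.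
    - exists (S (m - n)). split; [lia|]. apply (nsum_one_periodic n).
      replace (n + (m - n)) with m by lia. symmetry. exact H. }
  assert (Hopp : forall m n, one *+ S m <> neg (one *+ S n)).
  { intros m n H. apply Hno. exists (S (S (S (m + n)))). split; [lia|].
    apply nsum_one_neg. exact H. }
  intros m n s s' Hm Hn Heq.
  destruct m as [|m]; [lia|]. destruct n as [|n]; [lia|].
  destruct s, s'; unfold signed in Heq.
  - now rewrite (Hsame m n Heq).
  - now destruct (Hopp m n Heq).
  - destruct (Hopp n m). symmetry. exact Heq.
  - now rewrite (Hsame m n (neg_inj _ _ Heq)).
Qed.

End Units.

Lemma has_char_of_periodic p : 2 <= p -> one *+ p = one -> exists k, has_char A add zero k.
Proof.
  intros Hp2 Hp.
  set (P k := 1 <= k /\ forall b, b *+ S k = b).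
  destruct (dec_inh_nat_subset_has_unique_least_element P) as [k [[[Hk1 Hk] Hmin] _]].
  - intro k. apply classic.
  - exists (pred p). split; [lia|]. replace (S (pred p)) with p by lia.
    apply nsum_one_all. exact Hp.
  - exists k. repeat split; auto.
    intros j Hj1 Hjk Hj. specialize (Hmin j (conj Hj1 Hj)). lia.
Qed.

Lemma second_kind_alternative :
  neg one <> one -> ~ neg_bipotent A add T neg ->
  add (minus A add neg one one) one = one /\ second_kind A T neg /\
  ((exists k, has_char A add zero k) \/ units_pairwise_distinct A add zero neg one).
Proof.
  intros Hn1 Hnb.
  assert (H21 : add (add one one) (neg one) = one)
    by (apply two_minus_one_of_two_neq_one; auto using not_bipotent_two_neq_one).
  split; [rewrite e'_eq; exact H21|]. split.
  - intros a Ha Hna. apply Hn1. exact (proj1 (tangible_neg_fixed_iff a Ha) Hna).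
  - destruct (units_distinct_or_periodic H21) as [Hu|[p [Hp2 Hp]]]; [now right|left].
    exact (has_char_of_periodic p Hp2 Hp).
Qed.

End GroupModuleTriple.

Theorem theorem7p21 (A : Type) (add : A -> A -> A) (zero : A)
  (T : A -> Prop) (neg : A -> A) (act : A -> A -> A) (one : A)
  (Htriple : is_T_group_module_triple A add zero T neg act one)
  (Hmt : meta_tangible A add T neg) :
  let e := minus A add neg one one in
  let e' := add e one in
  neg_bipotent A add T neg \/
  (e' = one /\
   ((first_kind A T neg /\ has_char A add zero 2 /\
     height_le A add zero T 2) \/
    (second_kind A T neg /\
     ((exists k, has_char A add zero k) \/
      units_pairwise_distinct A add zero neg one)))).
Proof.
  destruct Htriple as [[add_assoc [add_comm [add0 [_ [neg_add [negK [_ [tangible_neg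
    [act_addr [act0r [act_neg [quasi_zero_not_tangible tangible_spanning]]]]]]]]]]]]
    [tangible_one [_ [act1r [tangible_inv _]]]]].
  intros e e'.
  destruct (classic (neg_bipotent A add T neg)) as [Hb|Hnb]; [now left|right].
  destruct (classic (neg one = one)) as [Hn1|Hn1].
  - destruct (first_kind_alternative A add zero T neg act one add_assoc add_comm add0
      act_addr act0r act_neg quasi_zero_not_tangible tangible_spanning tangible_one
      act1r tangible_inv Hmt Hn1 Hnb) as [He' Hfk].
    split; [exact He'|left; exact Hfk].
  - destruct (second_kind_alternative A add zero T neg act one add_assoc add_comm add0
      neg_add negK tangible_neg act_addr act0r act_neg quasi_zero_not_tangible
      tangible_spanning tangible_one act1r tangible_inv Hmt Hn1 Hnb) as [He' Hsk].
    split; [exact He'|right; exact Hsk].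
Qed.
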